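(* Let $d\ge3$ and let $\mathbf z_1,\dots,\mathbf z_d\in\mathbb Z^d$ be a basis of $\mathbb Z^d$. Suppose $|\underline{\mathbf z_3}|\geq|\underline{\mathbf z_1}|$ and $\det\underline\Lambda_{2,d-1}>3|\underline{\mathbf z_2}|\det\underline\Lambda_{2,d-2}$. Then $\mathfrak S_2\subset\operatorname{int}\mathfrak S_1$ and $R_2<R_1/3$.
   Context: $|\cdot|$ is the Euclidean norm. For $\mathbf x=(x_1,\dots,x_d)\in\mathbb R^d$ write $\underline{\mathbf x}=(x_1,\dots,x_{d-1})$. Let $\pi_d=\{\mathbf x\in\mathbb R^d:x_d=1\}$. For given vectors $\mathbf z_1,\mathbf z_2,\dots$: $\det\underline\Lambda_{k,l}=|\underline{\mathbf z_k}\wedge\dots\wedge\underline{\mathbf z_{k+l-1}}|$ ($1\le l\le d-1$); $R_k=1/(2|\underline{\mathbf z_{k+1}}|\det\underline\Lambda_{k,d-1})$; when $\underline{\mathbf z_k},\dots,\underline{\mathbf z_{k+d-2}}$ are linearly independent, $\boldsymbol\alpha_k$ is the unique point of $\pi_d$ orthogonal to $\mathbf z_k,\dots,\mathbf z_{k+d-2}$ and $\mathfrak S_k=\{\mathbf x\in\pi_d:|\mathbf x-\boldsymbol\alpha_k|\le R_k\}$, a closed ball in $\pi_d$ whose interior is taken relative to $\pi_d$. Whenever $\boldsymbol\alpha_k$ or $\mathfrak S_k$ appears it is implicitly assumed well defined. *)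

From HB Require Import structures.
From mathcomp Require Import all_boot all_order all_algebra.
From mathcomp Require Import reals.
Set Implicit Arguments. Unset Strict Implicit. Unset Printing Implicit Defensive.
Import Order.TTheory GRing.Theory Num.Theory.
Local Open Scope ring_scope.

Section Defs.
Variable R : realType.

Definition enorm n (v : 'rV[R]_n) : R := Num.sqrt (\sum_(i < n) v 0 i ^+ 2).

Definition under d (x : 'rV[R]_d) : 'rV[R]_(d.-1) :=
  \row_(i < d.-1) x 0 (widen_ord (leq_pred d) i).

(* x lies in pi_d, i.e. x_d = 1 (the coordinate of index d-1 in 0-based 'I_d) *)
Definition in_pi d (x : 'rV[R]_d) : Prop :=
  forall i : 'I_d, val i = d.-1 -> x 0 i = 1.

(* Gram matrix and norm of a wedge product |v_1 /\ ... /\ v_l| = sqrt(det Gram) *)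
Definition gram n l (v : 'I_l -> 'rV[R]_n) : 'M[R]_l :=
  \matrix_(i, j) (v i *m (v j)^T) 0 0.
Definition wedge_norm n l (v : 'I_l -> 'rV[R]_n) : R := Num.sqrt (\det (gram v)).

(* z_k as a real vector; the family is indexed by nat, z 1, ..., z d meaningful *)
Definition zr d (z : nat -> 'rV[int]_d) (k : nat) : 'rV[R]_d := map_mx intr (z k).

(* det underline Lambda_{k,l} = |underline z_k /\ ... /\ underline z_{k+l-1}| *)
Definition detL d (z : nat -> 'rV[int]_d) (k l : nat) : R :=
  wedge_norm (fun i : 'I_l => under (zr z (k + i))).

Definition Rk d (z : nat -> 'rV[int]_d) (k : nat) : R :=
  1 / (2 * enorm (under (zr z k.+1)) * detL z k d.-1).

Definition under_indep d (z : nat -> 'rV[int]_d) (k : nat) : Prop :=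
  row_free (\matrix_(i < d.-1, j < d.-1) under (zr z (k + i)) 0 j).

(* a is "the" point alpha_k : a in pi_d and a orthogonal to z_k,...,z_{k+d-2}
   (unique when under_indep z k holds) *)
Definition is_alpha d (z : nat -> 'rV[int]_d) (k : nat) (a : 'rV[R]_d) : Prop :=
  in_pi a /\ forall i : 'I_d.-1, (a *m (zr z (k + i))^T) 0 0 = 0.

End Defs.

Definition basisZ d (z : nat -> 'rV[int]_d) : Prop :=
  forall v : 'rV[int]_d, exists! c : 'rV[int]_d,
    v = \sum_(i < d) c 0 i *: z i.+1.

From HB Require Import structures.
From mathcomp Require Import all_boot all_order all_algebra.
From mathcomp Require Import reals.
From mathcomp Require Import ring lra.
Import Order.TTheory GRing.Theory Num.Theory.
Local Open Scope ring_scope.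

(* Let A and B be the (d-1)x(d-1) matrices whose rows are the truncations of
   z_1, ..., z_{d-1} and of z_2, ..., z_d, and let u be the dual vector of the
   first row of A (the first column of A^-1).  Both alpha_1 and alpha_2 have
   last coordinate 1 and are orthogonal to z_2, ..., z_{d-1}, so the truncation
   of alpha_2 - alpha_1 is t u with t = <z_1, alpha_2>; Cramer's rule for the
   unimodular matrix (z_1, ..., z_d) gives |t| |det B| = 1, hence
   |alpha_1 - alpha_2| = |u| / |det B|.  The volume spanned by the truncations
   of z_2, ..., z_{d-1} is |det A| |u| (a cofactor of the Gram matrix A A^T), and
   Cauchy-Schwarz gives |z_1| |u| >= 1, so |z_3| |u| >= 1.  The hypothesis
   |det B| > 3 |z_2| |det A| |u| then yields R_2 < R_1/3 and
   |alpha_1 - alpha_2| + R_2 < R_1, i.e. S_2 lies inside the open ball S_1. *)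

Definition dot {R : pzSemiRingType} {n} (u v : 'rV[R]_n) : R := (u *m v^T) 0 0.

Section Dot.
Context {R : comPzRingType} {n : nat}.
Implicit Types (u v w : 'rV[R]_n) (c : R).

Lemma dotE u v : dot u v = \sum_j u 0 j * v 0 j.
Proof. by rewrite /dot mxE; apply: eq_bigr => j _; rewrite mxE. Qed.

Lemma dotC u v : dot u v = dot v u.
Proof. by rewrite !dotE; apply: eq_bigr => j _; rewrite mulrC. Qed.

Lemma dotDr u v w : dot u (v + w) = dot u v + dot u w.
Proof. by rewrite /dot linearD mulmxDr mxE. Qed.

Lemma dotZr u c v : dot u (c *: v) = c * dot u v.
Proof. by rewrite /dot linearZ -scalemxAr mxE. Qed.

Lemma dotNr u v : dot u (- v) = - dot u v.
Proof. by rewrite -scaleN1r dotZr mulN1r. Qed.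

Lemma dotBr u v w : dot u (v - w) = dot u v - dot u w.
Proof. by rewrite dotDr dotNr. Qed.

Lemma dotDl u v w : dot (u + v) w = dot u w + dot v w.
Proof. by rewrite dotC dotDr !(dotC w). Qed.

Lemma dotZl c u v : dot (c *: u) v = c * dot u v.
Proof. by rewrite dotC dotZr dotC. Qed.

Lemma dot_row m p (A : 'M[R]_(m, n)) (B : 'M[R]_(p, n)) i j :
  dot (row i A) (row j B) = (A *m B^T) i j.
Proof. by rewrite dotE mxE; apply: eq_bigr => l _; rewrite !mxE. Qed.

End Dot.

Section RealDot.
Context {R : realFieldType} {n : nat}.
Implicit Types (u v : 'rV[R]_n).

Lemma dot_self_ge0 v : 0 <= dot v v.
Proof. by rewrite dotE sumr_ge0 // => j _; rewrite -expr2 sqr_ge0. Qed.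

Lemma dot_self_eq0 v : (dot v v == 0) = (v == 0).
Proof.
apply/eqP/eqP => [|->]; last by rewrite dotE big1 // => j _; rewrite mxE mul0r.
rewrite dotE => /psumr_eq0P v0; apply/rowP => j; rewrite mxE.
by apply/eqP; rewrite -sqrf_eq0 expr2 v0 // => l _; rewrite -expr2 sqr_ge0.
Qed.

Lemma dot_sqr_le u v : dot u v ^+ 2 <= dot u u * dot v v.
Proof.
have [->|v0] := eqVneq v 0.
  by rewrite /dot trmx0 !mulmx0 mxE expr0n mulr0.
have vv0 : 0 < dot v v by rewrite lt0r dot_self_eq0 v0 dot_self_ge0.
have := dot_self_ge0 (dot v v *: u + (- dot u v) *: v).
rewrite !(dotDl, dotDr, dotZl, dotZr) (dotC v u).
rewrite [X in 0 <= X](_ : _ = dot v v * (dot u u * dot v v - dot u v ^+ 2)); last by ring.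
by rewrite pmulr_rge0 // subr_ge0.
Qed.
End RealDot.

Section EuclideanNorm.
Context {R : realType} {n : nat}.
Implicit Types (u v : 'rV[R]_n).

Lemma enormE v : enorm v = Num.sqrt (dot v v).
Proof. by rewrite dotE; congr Num.sqrt; apply: eq_bigr => j _; rewrite expr2. Qed.

Lemma enorm_ge0 v : 0 <= enorm v.
Proof. exact: sqrtr_ge0. Qed.

Lemma sqr_enorm v : enorm v ^+ 2 = dot v v.
Proof. by rewrite enormE sqr_sqrtr ?dot_self_ge0. Qed.

Lemma enormZ (c : R) v : enorm (c *: v) = `|c| * enorm v.
Proof. by rewrite !enormE dotZl dotZr mulrA -expr2 sqrtrM ?sqr_ge0 ?sqrtr_sqr. Qed.

Lemma cauchy_schwarz u v : `|dot u v| <= enorm u * enorm v.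
Proof.
rewrite -ler_sqr ?nnegrE ?mulr_ge0 ?enorm_ge0 // exprMn !sqr_enorm.
by rewrite real_normK ?num_real // dot_sqr_le.
Qed.

Lemma ler_enormD u v : enorm (u + v) <= enorm u + enorm v.
Proof.
rewrite -ler_sqr ?nnegrE ?addr_ge0 ?enorm_ge0 // sqrrD !sqr_enorm.
rewrite !(dotDl, dotDr) (dotC v u).
have := le_trans (ler_norm (dot u v)) (cauchy_schwarz u v); lra.
Qed.
End EuclideanNorm.

Lemma dot_row_mulmx {R : comPzRingType} m n (A : 'M[R]_(m, n)) (v : 'rV[R]_n) l :
  dot (row l A) v = (A *m v^T) l 0.
Proof. by rewrite -dot_row row_id. Qed.

Lemma cramer_row {R : comPzRingType} {n} {Z : 'M[R]_n} {a : 'rV[R]_n} {i} :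
  (forall l, l != i -> dot (row l Z) a = 0) -> forall j,
  \det Z * a 0 j = dot (row i Z) a * cofactor Z i j.
Proof.
move=> a_orth j.
have Za : Z *m a^T = dot (row i Z) a *: delta_mx i 0.
  apply/matrixP => l k; rewrite ord1 -dot_row_mulmx !mxE eqxx andbT.
  by have [->|/a_orth ->] := eqVneq l i; rewrite ?mulr1 ?mulr0.
have := congr1 (fun M : 'cV[R]_n => M j 0) (congr1 (mulmx^~ a^T) (mul_adj_mx Z)).
by rewrite /= -mulmxA Za -scalemxAr -colE mul_scalar_mx !mxE => <-.
Qed.

Definition dual_row {R : fieldType} {n} (A : 'M[R]_n) (i : 'I_n) : 'rV[R]_n :=
  row i (invmx A)^T.

Section DualBasis.
Context {R : fieldType} {n : nat} {A : 'M[R]_n}.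
Hypothesis uA : A \in unitmx.

Lemma dot_row_dual l i : dot (row l A) (dual_row A i) = (l == i)%:R.
Proof. by rewrite dot_row trmxK mulmxV // mxE. Qed.

Lemma orthogonal_dual_row i (u : 'rV[R]_n) :
  (forall l, l != i -> dot (row l A) u = 0) ->
  u = dot (row i A) u *: dual_row A i.
Proof.
move=> u_orth; set c := dot (row i A) u.
suff : A *m (u - c *: dual_row A i)^T = 0.
  move/(congr1 (mulmx (invmx A))); rewrite mulKmx // mulmx0 => /(congr1 trmx).
  by rewrite trmxK trmx0 => /eqP; rewrite subr_eq0 => /eqP.
apply/matrixP => l k; rewrite ord1 -dot_row_mulmx dotBr dotZr dot_row_dual mxE.
by have [->|/u_orth ->] := eqVneq l i; rewrite ?mulr1 ?mulr0 subrr.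
Qed.

Lemma det_gram_minor i :
  \det (row' i (col' i (A *m A^T))) =
  \det A ^+ 2 * dot (dual_row A i) (dual_row A i).
Proof.
set G := A *m A^T.
have uG : G \in unitmx by rewrite unitmx_mul unitmx_tr uA.
have invG : invmx G = (invmx A)^T *m invmx A.
  have GX : G *m ((invmx A)^T *m invmx A) = 1%:M.
    by rewrite -mulmxA (mulmxA A^T) trmx_inv mulmxV ?unitmx_tr // mul1mx mulmxV.
  by rewrite -[RHS](mulKmx uG) GX mulmx1.
have adjG : \adj G = \det G *: invmx G.
  by rewrite /invmx uG scalerA divff ?scale1r // -unitfE.
have sign_ii : (-1) ^+ (i + i) = 1 :> R by rewrite -signr_odd addnn odd_double.
have := congr1 (fun M : 'M[R]_n => M i i) adjG.
rewrite /= !mxE /cofactor sign_ii mul1r => ->.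
by rewrite invG dot_row trmxK det_mulmx det_tr expr2.
Qed.

End DualBasis.

Section RealDualBasis.
Context {R : realType} {n : nat} {A : 'M[R]_n}.
Hypothesis uA : A \in unitmx.

Lemma enorm_row_dual_ge1 i : 1 <= enorm (row i A) * enorm (dual_row A i).
Proof.
by have := cauchy_schwarz (row i A) (dual_row A i); rewrite dot_row_dual // eqxx normr1.
Qed.

Lemma enorm_row_gt0 i : 0 < enorm (row i A).
Proof.
rewrite lt0r enorm_ge0 andbT; apply: contraTneq (enorm_row_dual_ge1 i) => ->.
by rewrite mul0r ler10.
Qed.

End RealDualBasis.

Lemma wedge_norm_square {R : realType} n (v : 'I_n -> 'rV[R]_n) :
  wedge_norm v = `|\det (\matrix_i v i)|.
Proof.
rewrite /wedge_norm -sqrtr_sqr; congr Num.sqrt.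
have -> : gram v = \matrix_i v i *m (\matrix_i v i)^T.
  by apply/matrixP => i j; rewrite -dot_row !rowK mxE.
by rewrite det_mulmx det_tr expr2.
Qed.

Lemma basisZ_norm_det {R : realType} n (z : nat -> 'rV[int]_n) :
  basisZ z -> `|\det (\matrix_(i < n) zr R z i.+1)| = 1.
Proof.
move=> zB.
have /fin_all_exists [c zc] : forall j : 'I_n, exists c : 'rV[int]_n,
    delta_mx 0 j = \sum_i c 0 i *: z i.+1.
  by move=> j; have [c [zc _]] := zB (delta_mx 0 j); exists c.
have /mulmx1_unit [_] : \matrix_j c j *m \matrix_(i < n) z i.+1 = 1%:M.
  apply/matrixP => j l; rewrite !mxE eq_sym.
  have := congr1 (fun v : 'rV[int]_n => v 0 l) (zc j).
  rewrite !mxE eqxx /= summxE => ->.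
  by apply: eq_bigr => i _; rewrite !mxE.
have -> : \matrix_(i < n) zr R z i.+1 = map_mx intr (\matrix_(i < n) z i.+1).
  by apply/matrixP => i j; rewrite !mxE.
rewrite unitmxE det_map_mx -intr_norm.
by case/orP => /eqP ->; rewrite ?normrN normr1.
Qed.

Section Truncation.
Context {R : realType} {n : nat}.
Implicit Types (v w : 'rV[R]_n.+1).

Lemma under_widen v j : under v 0 j = v 0 (widen_ord (leqnSn n) j).
Proof. by rewrite mxE; congr (v 0 _); apply: val_inj. Qed.

Lemma dot_under w v : v 0 ord_max = 0 -> dot (under w) (under v) = dot w v.
Proof.
move=> v_last; rewrite !dotE big_ord_recr /= v_last mulr0 addr0.
by apply: eq_bigr => j _; rewrite !under_widen.
Qed.

Lemma enorm_under v : v 0 ord_max = 0 -> enorm (under v) = enorm v.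
Proof. by move=> v_last; rewrite !enormE dot_under. Qed.

End Truncation.

Definition under_mx (R : realType) {d} (z : nat -> 'rV[int]_d) k : 'M[R]_d.-1 :=
  \matrix_(i < d.-1) under (zr R z (k + i)).

Lemma row_under_mx (R : realType) {d} (z : nat -> 'rV[int]_d) k i :
  row i (under_mx R z k) = under (zr R z (k + i)).
Proof. exact: rowK. Qed.

Lemma detL_under_mx (R : realType) {d} (z : nat -> 'rV[int]_d) k :
  detL R z k d.-1 = `|\det (under_mx R z k)|.
Proof. exact: wedge_norm_square. Qed.

Lemma detL_minor {R : realType} {m} {z : nat -> 'rV[int]_m.+2} :
  under_mx R z 1 \in unitmx ->
  detL R z 2 m = `|\det (under_mx R z 1)| * enorm (dual_row (under_mx R z 1) 0).
Proof.
move=> uA; rewrite /detL /wedge_norm.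
have -> : gram (fun i : 'I_m => under (zr R z (2 + i))) =
          row' 0 (col' 0 (under_mx R z 1 *m (under_mx R z 1)^T)).
  apply/matrixP => i j; rewrite mxE [RHS]mxE [RHS]mxE -[in RHS]dot_row.
  by rewrite !rowK !lift0.
by rewrite (det_gram_minor uA 0) sqrtrM ?sqr_ge0 // sqrtr_sqr enormE.
Qed.

Section ConsecutiveAlphas.
Context {R : realType} {m : nat} {z : nat -> 'rV[int]_m.+2} {a1 a2 : 'rV[R]_m.+2}.
Hypotheses (zB : basisZ z) (a1P : is_alpha z 1 a1) (a2P : is_alpha z 2 a2).

Let A := under_mx R z 1.
Let B := under_mx R z 2.
Let t := dot (zr R z 1) a2.
Hypothesis uA : A \in unitmx.

Lemma alpha1_orth {i} : (i <= m)%N -> dot (zr R z i.+1) a1 = 0.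
Proof. by move=> le_im; rewrite dotC; case: a1P => _ /(_ (@Ordinal m.+1 i le_im)). Qed.

Lemma alpha2_orth {i} : (i <= m)%N -> dot (zr R z i.+2) a2 = 0.
Proof. by move=> le_im; rewrite dotC; case: a2P => _ /(_ (@Ordinal m.+1 i le_im)). Qed.

Lemma alpha_sub_last : (a2 - a1) 0 ord_max = 0.
Proof.
have [[a1_pi _] [a2_pi _]] := (a1P, a2P).
by rewrite !mxE (a1_pi ord_max) // (a2_pi ord_max) // subrr.
Qed.

Lemma under_alpha_sub : under (a2 - a1) = t *: dual_row A 0.
Proof.
have dotA l :
    dot (row l A) (under (a2 - a1)) = dot (zr R z l.+1) a2 - dot (zr R z l.+1) a1.
  by rewrite row_under_mx dot_under ?alpha_sub_last // dotBr.
rewrite [LHS](orthogonal_dual_row uA 0 (under (a2 - a1))).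
  by rewrite dotA alpha1_orth // subr0.
move=> l; case: (unliftP 0 l) => [l' ->|->] // _.
have lt_l'm : (l' < m)%N := ltn_ord l'.
by rewrite dotA lift0 (alpha2_orth (ltnW lt_l'm)) alpha1_orth ?subrr.
Qed.

Lemma alpha_scale_det : `|t| * `|\det B| = 1.
Proof.
set Z := \matrix_(i < m.+2) zr R z i.+1.
have Z_orth l : l != 0 -> dot (row l Z) a2 = 0.
  by case: (unliftP 0 l) => [l' ->|->] // _; rewrite rowK lift0 alpha2_orth // -ltnS.
have minorZ : row' 0 (col' ord_max Z) = B.
  apply/matrixP => i j; rewrite !mxE lift0; congr (intr (z _ 0 _)).
  by apply: val_inj; exact: lift_max.
have [a2_pi _] := a2P.
have := cramer_row Z_orth ord_max.
rewrite (a2_pi ord_max) // mulr1 rowK /cofactor minorZ => /(congr1 Num.norm).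
by rewrite basisZ_norm_det // !normrM normrX normrN1 expr1n mul1r => ->.
Qed.

Lemma enorm_alpha_sub : enorm (a2 - a1) = enorm (dual_row A 0) / `|\det B|.
Proof.
have tB := alpha_scale_det.
have B0 : `|\det B| != 0.
  by apply/eqP => B0; move: tB; rewrite B0 mulr0 => /esym/eqP; rewrite oner_eq0.
rewrite -enorm_under ?alpha_sub_last // under_alpha_sub enormZ.
by apply: (mulIf B0); rewrite divfK // mulrAC tB mul1r.
Qed.

End ConsecutiveAlphas.

Lemma radius_bounds {R : realFieldType} {n2 n3 s D1 D2 : R} :
  0 < n2 -> 0 < D1 -> 0 <= n3 -> 1 <= n3 * s -> 3 * n2 * (D1 * s) < D2 ->
  s / D2 + 1 / (2 * n3 * D2) < 1 / (2 * n2 * D1) /\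
  1 / (2 * n3 * D2) < 1 / (2 * n2 * D1) / 3.
Proof.
move=> n2_gt0 D1_gt0 n3_ge0 n3s hD.
have n3_gt0 : 0 < n3.
  rewrite lt0r n3_ge0 andbT; apply: contraTneq n3s => ->.
  by rewrite mul0r ler10.
have s_gt0 : 0 < s by nra.
have D2_gt0 : 0 < D2 by apply: lt_trans hD; rewrite !mulr_gt0.
have n3D2 : n3 * (3 * n2 * (D1 * s)) < n3 * D2 by rewrite ltr_pM2l.
have slack_ge0 : 0 <= n2 * D1 * (n3 * s - 1) by rewrite !mulr_ge0 ?subr_ge0 // ltW.
split; rewrite -subr_gt0.
  rewrite [X in 0 < X](_ : _ = (n3 * D2 - 2 * n2 * D1 * (n3 * s) - n2 * D1) /
                              (2 * n2 * n3 * D1 * D2)).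
    by apply: divr_gt0; [nra | rewrite !mulr_gt0].
  by field; rewrite !lt0r_neq0.
rewrite [X in 0 < X](_ : _ = (n3 * D2 - 3 * n2 * D1) / (6 * n2 * n3 * D1 * D2)).
  by apply: divr_gt0; [nra | rewrite !mulr_gt0].
by field; rewrite !lt0r_neq0.
Qed.

Theorem lemma6 (R : realType) (d : nat) (z : nat -> 'rV[int]_d)
  (a1 a2 : 'rV[R]_d) :
  (3 <= d)%N ->
  basisZ z ->
  under_indep R z 1 -> under_indep R z 2 ->
  is_alpha z 1 a1 -> is_alpha z 2 a2 ->
  enorm (under (zr R z 3)) >= enorm (under (zr R z 1)) ->
  detL R z 2 d.-1 > 3 * enorm (under (zr R z 2)) * detL R z 2 d.-2 ->
  (forall x : 'rV[R]_d, in_pi x -> enorm (x - a2) <= Rk R z 2 ->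
      enorm (x - a1) < Rk R z 1)
  /\ Rk R z 2 < Rk R z 1 / 3.
Proof.
case: d z a1 a2 => [|[|[|m]]] // z a1 a2 _ zB indep1 _ a1P a2P n31 hD.
have uA : under_mx R z 1 \in unitmx by rewrite -row_free_unit.
have n2_gt0 : 0 < enorm (under (zr R z 2)).
  by have := enorm_row_gt0 uA (Ordinal (isT : (1 < m.+2)%N)); rewrite row_under_mx.
have DA_gt0 : 0 < `|\det (under_mx R z 1)| by rewrite normr_gt0 -unitfE.
have n3s : 1 <= enorm (under (zr R z 3)) * enorm (dual_row (under_mx R z 1) 0).
  apply: le_trans (enorm_row_dual_ge1 uA 0) _.
  by rewrite row_under_mx ler_wpM2r ?enorm_ge0.
move: hD; rewrite detL_under_mx (detL_minor uA) => hD.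
have [dist_bound R_bound] := radius_bounds n2_gt0 DA_gt0 (enorm_ge0 _) n3s hD.
rewrite /Rk !detL_under_mx; split => // x _ hx.
rewrite -[x](subrK a2) -addrA.
apply: le_lt_trans (ler_enormD _ _) _.
rewrite (enorm_alpha_sub zB a1P a2P uA); lra.
Qed.
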